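(* Let $p\ge 3$ be an integer, let $T$ be a tree and let $\ell=|V(T^{p+1})|$. Then $T^{p+1}\subseteq P_\ell\vee K((p-1)\ell;p-1)$ and $T^{p+1}\subseteq \ell P_2\vee K(2(p-1)\ell;p-1)$.
   Context: For a graph $F$ and integer $p\ge1$, the edge blow-up $F^{p+1}$ is the graph obtained from $F$ by replacing each edge by a clique $K_{p+1}$ containing that edge, where the newly added vertices of the different cliques are all distinct. $P_\ell$ is the path on $\ell$ vertices, $\ell P_2$ is a matching of $\ell$ edges, $K(N;q)$ is the complete $q$-partite graph on $N$ vertices with part sizes differing by at most one, $\vee$ denotes the join of vertex-disjoint graphs, and $\subseteq$ means ''is isomorphic to a subgraph of''. *)

From mathcomp Require Import all_boot.
Set Implicit Arguments. Unset Strict Implicit. Unset Printing Implicit Defensive.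

(* Simple graphs: a symmetric irreflexive relation e on a finite vertex type. *)

Definition acyclic (V : finType) (e : rel V) : Prop :=
  ~ exists s : seq V, [/\ 3 <= size s, uniq s & cycle e s].

Definition connected (V : finType) (e : rel V) : Prop :=
  forall x y : V, connect e x y.

Definition is_tree (V : finType) (e : rel V) : Prop :=
  connected e /\ acyclic e.

Definition is_edge (V : finType) (e : rel V) (A : {set V}) : bool :=
  [exists u, [exists v, e u v && (A == [set u; v])]].

Definition edge_type (V : finType) (e : rel V) : finType :=
  {A : {set V} | is_edge e A}.

(* Edge blow-up F^{p+1}: vertices of F plus p-1 new vertices per edge;
   each edge together with its new vertices forms a clique K_{p+1}. *)
Definition blowup_type (V : finType) (e : rel V) (p : nat) : finType :=
  (V + (edge_type e * 'I_(p.-1)))%type.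

Definition blowup_rel (V : finType) (e : rel V) (p : nat) : rel (blowup_type e p) :=
  fun x y =>
    match x, y with
    | inl u, inl v => e u v
    | inl u, inr (A, _) => u \in val A
    | inr (A, _), inl u => u \in val A
    | inr (A, i), inr (B, j) => (A == B) && (i != j)
    end.

Definition join_rel (A B : finType) (eA : rel A) (eB : rel B) : rel (A + B)%type :=
  fun x y =>
    match x, y with
    | inl a, inl a' => eA a a'
    | inr b, inr b' => eB b b'
    | _, _ => true
    end.

Definition path_rel (n : nat) : rel 'I_n :=
  fun i j => (i.+1 == j :> nat) || (j.+1 == i :> nat).

Definition matching_rel (n : nat) : rel 'I_(2 * n) :=
  fun i j => (i./2 == j./2) && (i != j).

(* K(N;q): complete q-partite graph on N vertices with balanced parts,
   realized with parts the residue classes mod q. *)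
Definition kpart_rel (N q : nat) : rel 'I_N :=
  fun i j => i %% q != j %% q.

Definition subgraph (V W : finType) (eV : rel V) (eW : rel W) : Prop :=
  exists f : V -> W, injective f /\ forall x y, eV x y -> eW (f x) (f y).

Arguments blowup_rel {V} e p.
Arguments blowup_type {V} e p.
Arguments edge_type {V} e.
Arguments path_rel n : clear implicits.
Arguments matching_rel n : clear implicits.
Arguments kpart_rel N q : clear implicits.
Arguments join_rel {A B} eA eB.

From mathcomp Require Import all_boot zify.
Set Implicit Arguments. Unset Strict Implicit. Unset Printing Implicit Defensive.

(* A tree is bipartite.  Colour its vertices 0 and 1 and the p - 1 new
   vertices of each clique 0, ..., p - 2: the only clashes are between the
   new vertices 0, 1 of a clique and the tree vertices.  So send the new
   vertices 0 and 1 of the k-th clique to the adjacent pair {2k, 2k+1} of the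
   path (or matching), which has room for them because p >= 3, and every other
   vertex injectively into the part of K(N; p-1) indexed by its colour. *)

Lemma split_not_uniq (T : eqType) (s : seq T) :
  ~~ uniq s -> exists x s1 s2 s3, s = s1 ++ x :: s2 ++ x :: s3.
Proof.
elim: s => [|y s IHs] //=; rewrite negb_and negbK => /orP [/splitPr [s2 s3] | /IHs].
  by exists y, [::], s2, s3.
by case=> x [s1 [s2 [s3 ->]]]; exists x, (y :: s1), s2, s3.
Qed.

Lemma cycle_cat_cons (T : eqType) (e : rel T) x s1 s2 :
  cycle e (x :: s1 ++ x :: s2) = cycle e (x :: s1) && cycle e (x :: s2).
Proof. by rewrite /= rcons_cat cat_path /= !rcons_path andbA. Qed.

(* A closed walk through a repeated vertex splits into two shorter ones. *)
Lemma acyclic_cycle_even (V : finType) (e : rel V) :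
  irreflexive e -> acyclic e -> forall s, cycle e s -> ~~ odd (size s).
Proof.
move=> irr_e acy_e s; elim: {s}(size s).+1 {-2}s (ltnSn (size s)) => // n IHn s.
rewrite ltnS => le_s_n cyc_s; have [uniq_s | /split_not_uniq] := boolP (uniq s).
  have [ge3 | lt3] := leqP 3 (size s); first by case: acy_e; exists s.
  by case: s lt3 cyc_s {le_s_n uniq_s} => [|x [|y [|]]] //= _; rewrite irr_e.
case=> x [s1 [s2 [s3 def_s]]].
move: cyc_s; rewrite -(rot_cycle (size s1)) {1}def_s rot_size_cat cat_cons -catA.
rewrite cat_cons cycle_cat_cons => /andP [cyc1 cyc2].
have size_s : size s = (size s2).+1 + (size (s3 ++ s1)).+1.
  by rewrite def_s !size_cat /= size_cat /=; lia.
have /IHn even1 : size (x :: s2) < n by move: le_s_n; rewrite size_s /=; lia.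
have /IHn even2 : size (x :: s3 ++ s1) < n by move: le_s_n; rewrite size_s /=; lia.
by rewrite size_s oddD (negbTE (even1 cyc1)) (negbTE (even2 cyc2)).
Qed.

Lemma acyclic_bipartite (V : finType) (e : rel V) :
  symmetric e -> irreflexive e -> acyclic e ->
  exists c : V -> bool, forall u v, e u v -> c u != c v.
Proof.
move=> sym_e irr_e acy_e; have csym_e := sym_connect_sym sym_e.
have root_path x : exists P, path e (root e x) P && (x == last (root e x) P).
  have /connectP [P e_P x_last] : connect e (root e x) x by rewrite csym_e connect_root.
  by exists P; rewrite e_P -x_last eqxx.
(* Colour by the parity of a fixed walk from the root of the component: an edge
   between equal parities would close a walk of odd length. *)
pose P x := xchoose (root_path x).
have P_root x : path e (root e x) (P x) && (x == last (root e x) (P x)) :=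
  xchooseP (root_path x).
exists (fun x => odd (size (P x))) => u v e_uv; apply/negP => /eqP same_parity.
have r_uv : root e u = root e v by apply/(rootP csym_e)/connect1.
have /andP [Pu /eqP u_last] := P_root u; have /andP [Pv /eqP v_last] := P_root v.
rewrite r_uv in Pu u_last; set r := root e v in Pu u_last Pv v_last.
suff /(acyclic_cycle_even irr_e acy_e) : cycle e (P u ++ v :: rev (belast r (P v))).
  by rewrite size_cat /= size_rev size_belast addnS /= oddD same_parity addbb.
rewrite (cycle_path r).
have -> : last r (P u ++ v :: rev (belast r (P v))) = r.
  rewrite last_cat /=; move: v_last; case: (P v) => [|y t] /= ->//.
  by rewrite rev_cons last_rcons.
rewrite cat_path Pu /= -u_last e_uv /= {1}v_last rev_path.
by rewrite (eq_path (e' := e)) // => a b; rewrite /= sym_e.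
Qed.

Lemma subgraph_join (B X Y : finType) (eB : rel B) (eX : rel X) (eY : rel Y)
    (f : B -> option X) (g : B -> Y) :
  (forall x y a, f x = Some a -> f y = Some a -> x = y) ->
  (forall x y, f x = None -> f y = None -> g x = g y -> x = y) ->
  (forall x y a b, f x = Some a -> f y = Some b -> eB x y -> eX a b) ->
  (forall x y, f x = None -> f y = None -> eB x y -> eY (g x) (g y)) ->
  subgraph eB (join_rel eX eY).
Proof.
move=> f_inj g_inj f_edge g_edge.
exists (fun x => if f x is Some a then inl a else inr (g x)); split.
  move=> x y; case fx: (f x) => [a|]; case fy: (f y) => [b|] // [].
    by move=> eq_ab; apply: (f_inj x y a) => //; rewrite fy eq_ab.
  exact: g_inj.
move=> x y; case fx: (f x) => [a|]; case fy: (f y) => [b|] //=.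
  exact: f_edge.
exact: g_edge.
Qed.

Definition contains_pairing (n : nat) (h : rel 'I_n) : Prop :=
  forall i j : 'I_n, i./2 = j./2 -> i != j -> h i j.

Lemma path_rel_pairing (n : nat) : contains_pairing (path_rel n).
Proof.
move=> i j eq_half neq_ij; rewrite /path_rel.
have := odd_double_half i; have := odd_double_half j; rewrite eq_half.
move: neq_ij; rewrite -val_eqE /=; case: (odd i); case: (odd j) => /=; lia.
Qed.

Lemma matching_rel_pairing (n : nat) : contains_pairing (matching_rel n).
Proof. by move=> i j eq_half neq_ij; rewrite /matching_rel eq_half eqxx. Qed.

Lemma pairing_embedding (E : finType) (n : nat) (h : rel 'I_n) :
  contains_pairing h -> 2 * #|E| <= n ->
  exists f : E * bool -> 'I_n, injective f /\ forall a b, h (f (a, b)) (f (a, ~~ b)).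
Proof.
move=> h_pairs card_E.
have rank_lt (a : E) : enum_rank a < #|E| := ltn_ord (enum_rank a).
have lt_n (ab : E * bool) : 2 * enum_rank ab.1 + ab.2 < n.
  by have := rank_lt ab.1; have := leq_b1 ab.2; lia.
pose f ab := Ordinal (lt_n ab).
have f_half a b : (f (a, b))./2 = enum_rank a.
  by rewrite /= addnC mul2n half_bit_double.
have f_odd a b : odd (f (a, b)) = b by rewrite /= oddD oddM oddb.
exists f; split.
  move=> [a b] [a' b'] eq_f.
  have eq_a : a = a'.
    by apply/enum_rank_inj/val_inj; rewrite /= -(f_half a b) -(f_half a' b') eq_f.
  have eq_b : b = b' by rewrite -(f_odd a b) eq_f f_odd.
  by rewrite eq_a eq_b.
move=> a b; apply: h_pairs; first by rewrite !f_half.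
by apply/negP => /eqP /(congr1 (fun i : 'I_n => odd i)); rewrite !f_odd; case: b.
Qed.

Lemma kpart_embedding (B : finType) (q m : nat) (col : B -> nat) :
  (forall x, col x < q) -> q * #|B| <= m ->
  exists g : B -> 'I_m, injective g /\ forall x, g x %% q = col x.
Proof.
move=> col_lt card_B.
have lt_m x : enum_rank x * q + col x < m.
  have rank_lt : enum_rank x < #|B| := ltn_ord (enum_rank x).
  have := col_lt x; nia.
pose g x := Ordinal (lt_m x).
have g_mod x : g x %% q = col x by rewrite /= modnMDl modn_small.
have g_div x : g x %/ q = enum_rank x.
  by rewrite /= divnMDl ?divn_small ?addn0 // (leq_ltn_trans _ (col_lt x)).
exists g; split=> // x y eq_g.
by apply/enum_rank_inj/val_inj; rewrite /= -!g_div eq_g.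
Qed.

Section BlowupIntoJoin.

Variables (V : finType) (e : rel V) (p : nat) (c : V -> bool).
Hypotheses (p_ge3 : 3 <= p) (c_proper : forall u v, e u v -> c u != c v).

Definition blowup_pair (x : blowup_type e p) : option (edge_type e * bool) :=
  if x is inr (A, i) then (if i < 2 then Some (A, i == 1 :> nat) else None) else None.

Definition blowup_colour (x : blowup_type e p) : nat :=
  match x with inl u => c u | inr (_, i) => i end.

Lemma card_edges_blowup : 2 * #|edge_type e| <= #|blowup_type e p|.
Proof.
rewrite card_sum card_prod card_ord mulnC; apply: leq_trans (leq_addl _ _).
by apply: leq_mul => //; lia.
Qed.

Lemma blowup_pair_inj x y ab :
  blowup_pair x = Some ab -> blowup_pair y = Some ab -> x = y.
Proof.
case: x => [|[A i]] //; case: y => [|[B j]] //=.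
case: ifP => // lt_i2; case: ifP => // lt_j2 [<-] [-> eq_ji].
by congr (inr (_, _)); apply: val_inj; move: eq_ji lt_i2 lt_j2 => /=; lia.
Qed.

Lemma blowup_pair_edge x y A b ab :
  blowup_pair x = Some (A, b) -> blowup_pair y = Some ab -> blowup_rel e p x y ->
  ab = (A, ~~ b).
Proof.
case: x => [|[A' i]] //; case: y => [|[B j]] //=.
case: ifP => // lt_i2; case: ifP => // lt_j2 [<- <-] [<-] /andP [/eqP <- ne_ij].
by congr (_, _); move: ne_ij; rewrite -val_eqE /=; lia.
Qed.

Lemma blowup_colour_lt x : blowup_colour x < p - 1.
Proof. by case: x => [u|[A i]] /=; [case: (c u) | have := ltn_ord i]; lia. Qed.

Lemma blowup_colour_proper x y :
  blowup_pair x = None -> blowup_pair y = None -> blowup_rel e p x y ->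
  blowup_colour x != blowup_colour y.
Proof.
case: x => [u|[A i]]; case: y => [v|[B j]] //=.
- by move=> _ _ /c_proper; case: (c u); case: (c v).
- by case: ifP => // /negbT; case: (c u); lia.
- by case: ifP => // /negbT; case: (c v); lia.
- by move=> _ _ /andP [].
Qed.

Lemma blowup_subgraph_join (n m : nat) (h : rel 'I_n) :
  contains_pairing h -> #|blowup_type e p| <= n -> (p - 1) * #|blowup_type e p| <= m ->
  subgraph (blowup_rel e p) (join_rel h (kpart_rel m (p - 1))).
Proof.
move=> h_pairs le_n le_m.
have [f [f_inj f_h]] := pairing_embedding h_pairs (leq_trans card_edges_blowup le_n).
have [g [g_inj g_mod]] := kpart_embedding blowup_colour_lt le_m.
apply: (subgraph_join (f := fun x => omap f (blowup_pair x)) (g := g)).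
- move=> x y a; case ex: (blowup_pair x) => [ab|] //.
  case ey: (blowup_pair y) => [ab'|] //=.
  by move=> [<-] [/f_inj eq_ab]; apply: (blowup_pair_inj ex); rewrite ey eq_ab.
- by move=> x y _ _ /g_inj.
- move=> x y a b; case ex: (blowup_pair x) => [[A b0]|] //.
  case ey: (blowup_pair y) => [ab'|] //= [<-] [<-].
  by move/(blowup_pair_edge ex ey) ->; apply: f_h.
- move=> x y; case ex: (blowup_pair x) => //; case ey: (blowup_pair y) => // _ _.
  by move/(blowup_colour_proper ex ey); rewrite /kpart_rel !g_mod.
Qed.

End BlowupIntoJoin.

Theorem lemma2p1 (p : nat) (V : finType) (e : rel V) :
  3 <= p -> symmetric e -> irreflexive e -> is_tree e ->
  let l := #|blowup_type e p| in
  subgraph (blowup_rel e p)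
    (join_rel (path_rel l) (kpart_rel ((p - 1) * l) (p - 1))) /\
  subgraph (blowup_rel e p)
    (join_rel (matching_rel l) (kpart_rel (2 * (p - 1) * l) (p - 1))).
Proof.
move=> p_ge3 sym_e irr_e [_ acy_e] l.
have [c c_proper] := acyclic_bipartite sym_e irr_e acy_e.
split; apply: (blowup_subgraph_join p_ge3 c_proper).
- exact: path_rel_pairing.
- exact: leqnn.
- exact: leqnn.
- exact: matching_rel_pairing.
- by rewrite leq_pmull.
- by rewrite -mulnA leq_pmull.
Qed.
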